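(* Let $n\ge 2$. (i) Every polynomial $f$ of degree $n$ which can be written as $f=gh$ with $g,h$ nonconstant integer-valued polynomials satisfies $P^+(f)\le n$. (ii) There exists a polynomial $f\in\mathbb{Z}[x]$ of degree $n$, reducible in $\mathbb{Q}[x]$, with $P^+(f)=n$. Consequently, the maximum of $P^+(f)$ over polynomials of degree $n$ that are products of two nonconstant integer-valued polynomials, and also over polynomials in $\mathbb{Z}[x]$ of degree $n$ that are reducible in $\mathbb{Q}[x]$, is exactly $n$.
   Context: A polynomial $f\in\mathbb{Q}[x]$ is integer-valued if $f(m)\in\mathbb{Z}$ for every $m\in\mathbb{Z}$. $P^+(f)=\#\{m\in\mathbb{Z}: f(m)>0\text{ and } f(m)\text{ is a prime number}\}$. *)

From HB Require Import structures.
From mathcomp Require Import all_boot all_order all_algebra.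
Set Implicit Arguments. Unset Strict Implicit. Unset Printing Implicit Defensive.
Import Order.TTheory GRing.Theory Num.Theory.
Local Open Scope ring_scope.

(* Polynomials over Q are {poly rat}; "degree n" is size f = n.+1. *)

Definition int_valued (f : {poly rat}) : Prop :=
  forall m : int, exists z : int, f.[m%:~R] = z%:~R.

Definition int_coeffs (f : {poly rat}) : Prop :=
  forall i : nat, exists z : int, f`_i = z%:~R.

Definition prime_value_at (f : {poly rat}) (m : int) : Prop :=
  exists p : nat, prime p /\ f.[m%:~R] = p%:R.

(* P^+(f) <= k : every finite set of integers m with f(m) a positive prime
   has at most k elements (in particular the set is finite). *)
Definition Pplus_le (f : {poly rat}) (k : nat) : Prop :=
  forall s : seq int, uniq s -> (forall m, m \in s -> prime_value_at f m) ->
    (size s <= k)%N.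

Definition Pplus_eq (f : {poly rat}) (k : nat) : Prop :=
  Pplus_le f k /\
  exists s : seq int, [/\ uniq s, (forall m, m \in s -> prime_value_at f m)
                        & size s = k].

From HB Require Import structures.
From mathcomp Require Import all_boot all_order all_algebra all_field.
From mathcomp Require Import polyorder polyrcf realalg.
From mathcomp Require Import zify lra ring.
From Stdlib Require Import Classical.
Set Implicit Arguments. Unset Strict Implicit. Unset Printing Implicit Defensive.
Import Order.TTheory GRing.Theory Num.Theory.
Local Open Scope ring_scope.

(* If g(m) h(m) = p is a positive prime, one of g(m), h(m) is 1 or -1
   and the other lies beyond it, on the same side.  Between two consecutive such
   points m < m', the signs of g(m') - g(m) and h(m') - h(m) are constrained by
   which factor is a unit at m and at m'.  By the mean value theorem, zeros and
   sign changes along the sequence of these increments of g give distinct roots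
   of g', at most deg g - 1 of them, and likewise for h; a finite case analysis
   shows that they account for all but one of the k - 1 gaps between the k points,
   whence k <= deg g + deg h = deg f.  Take distinct primes p_1, ..., p_(n-1), M = prod (p_i - 1) and a
   prime q = 1 + k M.  Such q exists: for a suitable t, Phi_M(M t) is not 0 or
   +-1, and modulo any of its prime factors q, M t is a root of Phi_M and of
   x^M - 1, hence a unit, hence q does not divide M, hence M t is a primitive
   M-th root of unity mod q.  Then f = x (1 + (-1)^(n-1) k prod (x - p_i))
   satisfies f(p_i) = p_i and f(1) = q.
   Part (iii) reduces to (i) by Gauss's lemma. *)

Inductive sign := Neg | Zero | Pos.

Definition zero_sign (a : sign) : nat := if a is Zero then 1%N else 0%N.

Definition opposite_signs (a b : sign) : nat :=
  match a, b with Neg, Pos | Pos, Neg => 1 | _, _ => 0 end%N.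

Fixpoint zeros_and_changes (s : seq sign) : nat :=
  match s with
  | a :: t => (zero_sign a + (if t is b :: _ then opposite_signs a b else 0)
               + zeros_and_changes t)%N
  | [::] => 0%N
  end.

Inductive position := BelowMinusOne | AtMinusOne | AtOne | AboveOne.

Definition position_rank (P : position) : nat :=
  match P with BelowMinusOne => 0 | AtMinusOne => 1 | AtOne => 2 | AboveOne => 3 end%N.

Definition far (P : position) : bool :=
  if P is (BelowMinusOne | AboveOne) then true else false.

Definition increment_ok (P P' : position) (a : sign) : bool :=
  match a with
  | Neg => (position_rank P' < position_rank P)%N
           || (position_rank P == position_rank P') && far P
  | Zero => position_rank P == position_rank P'
  | Pos => (position_rank P < position_rank P')%N
           || (position_rank P == position_rank P') && far P
  end.

(* The four ways a value [g(m) h(m)] can be a positive prime: [GisOne] means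
   [g(m) = 1 < h(m)], [GisMinusOne] means [g(m) = -1 > h(m)], and symmetrically. *)
Inductive kind := GisOne | GisMinusOne | HisOne | HisMinusOne.

Definition g_position (X : kind) : position :=
  match X with
  | GisOne => AtOne | GisMinusOne => AtMinusOne
  | HisOne => AboveOne | HisMinusOne => BelowMinusOne
  end.

Definition h_position (X : kind) : position :=
  match X with
  | HisOne => AtOne | HisMinusOne => AtMinusOne
  | GisOne => AboveOne | GisMinusOne => BelowMinusOne
  end.

Definition step_signs_ok (X Y : kind) (a b : sign) : bool :=
  increment_ok (g_position X) (g_position Y) a
  && increment_ok (h_position X) (h_position Y) b.

(* Amortisation credit of the counting argument: with it, [carry_first_step] and
   [carry_next_step] say that the zeros and sign changes of the increments pay for
   every step but one. *)
Definition carry (X Y : kind) (a b : sign) : nat :=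
  match X, Y, a, b with
  | GisOne, GisOne, Zero, (Zero | Pos) | GisMinusOne, GisMinusOne, Zero, (Zero | Neg)
  | HisOne, HisOne, (Zero | Pos), Zero | HisMinusOne, HisMinusOne, (Zero | Neg), Zero
      => 1
  | _, _, _, _ => 0
  end%N.

Lemma carry_first_step X Y a b : step_signs_ok X Y a b ->
  (carry X Y a b <= zero_sign a + zero_sign b)%N.
Proof. by case: X; case: Y; case: a; case: b. Qed.

Lemma carry_next_step X Y Z a b a' b' :
  step_signs_ok X Y a b -> step_signs_ok Y Z a' b' ->
  (1 + carry X Y a b <=
     zero_sign a + opposite_signs a a' + zero_sign b + opposite_signs b b'
     + carry Y Z a' b')%N.
Proof. by case: X; case: Y; case: Z; case: a; case: b; case: a'; case: b'. Qed.

Section SignsInRealDomain.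
Variable R : realDomainType.
Implicit Types (x y : R) (s : seq R).

Definition sign_of x : sign := if x == 0 then Zero else if x < 0 then Neg else Pos.

Fixpoint succ_diffs s : seq R :=
  if s is x :: ((y :: _) as t) then (y - x) :: succ_diffs t else [::].

Lemma sign_ofMr x y : 0 < y -> sign_of (x * y) = sign_of x.
Proof. by move=> y0; rewrite /sign_of mulf_eq0 (gt_eqF y0) orbF pmulr_llt0. Qed.

Lemma zero_sign_of x : zero_sign (sign_of x) = (x == 0).
Proof. by rewrite /sign_of; case: eqP => //; case: ltP. Qed.

Lemma opposite_sign_of x y : opposite_signs (sign_of x) (sign_of y) = (x * y < 0).
Proof.
rewrite mulr_lt0 /sign_of.
case: (x =P 0) => [->|_]; case: (y =P 0) => [->|_] //=; try by case: ltP.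
by case: (x < 0); case: (y < 0).
Qed.

Definition position_of x : position :=
  if x == 1 then AtOne else if x == -1 then AtMinusOne
  else if 1 < x then AboveOne else BelowMinusOne.

Lemma position_ofP x : 1 <= `|x| ->
  [\/ x = 1 /\ position_of x = AtOne, x = -1 /\ position_of x = AtMinusOne,
      1 < x /\ position_of x = AboveOne | x < -1 /\ position_of x = BelowMinusOne].
Proof.
rewrite /position_of ler_normr; case: (x =P 1) => [|x_ne1]; first by constructor 1.
case: (x =P -1) => [|x_nem1]; first by constructor 2.
case: ltP => x1 x_far; first by constructor 3.
by constructor 4; split => //; case/orP: x_far; lra.
Qed.

Lemma increment_ok_sign_of x x' : 1 <= `|x| -> 1 <= `|x'| ->
  increment_ok (position_of x) (position_of x') (sign_of (x' - x)).
Proof.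
move=> /position_ofP[] [? ->] /position_ofP[] [? ->]; rewrite /sign_of;
by case: (ltgtP (x' - x) 0) => ? //=; exfalso; lra.
Qed.

Lemma position_of1 : position_of 1 = AtOne.
Proof. by rewrite /position_of eqxx. Qed.

Lemma position_ofN1 : position_of (-1) = AtMinusOne.
Proof. by rewrite /position_of eqxx ifN //; apply/eqP; lra. Qed.

Lemma position_of_gt1 x : 1 < x -> position_of x = AboveOne.
Proof. by move=> x1; rewrite /position_of x1 !ifN //; apply/eqP; lra. Qed.

Lemma position_of_ltN1 x : x < -1 -> position_of x = BelowMinusOne.
Proof. by move=> x1; rewrite /position_of !ifN //; [rewrite -leNgt | apply/eqP..]; lra. Qed.

Definition unit_split x y : bool :=
  [|| (x == 1) && (1 < y), (x == -1) && (y < -1),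
      (y == 1) && (1 < x) | (y == -1) && (x < -1)].

Definition kind_of x y : kind :=
  match position_of x, position_of y with
  | AtOne, _ => GisOne | AtMinusOne, _ => GisMinusOne
  | _, AtOne => HisOne | _, _ => HisMinusOne
  end.

Lemma unit_split_positions x y : unit_split x y ->
  [/\ 1 <= `|x|, 1 <= `|y|, g_position (kind_of x y) = position_of x
    & h_position (kind_of x y) = position_of y].
Proof.
rewrite /unit_split /kind_of !ler_normr.
case/or4P=> /andP[/eqP-> ineq];
rewrite ?position_of1 ?position_ofN1 ?(position_of_gt1 ineq) ?(position_of_ltN1 ineq);
by split => //; apply/orP; first [by left; lra | right; lra].
Qed.

Lemma step_signs_kind_of x y x' y' : unit_split x y -> unit_split x' y' ->
  step_signs_ok (kind_of x y) (kind_of x' y') (sign_of (x' - x)) (sign_of (y' - y)).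
Proof.
case/unit_split_positions=> x1 y1 gX hX /unit_split_positions[x'1 y'1 gY hY].
by rewrite /step_signs_ok gX hX gY hY !increment_ok_sign_of.
Qed.

Definition step_carry (u v : R * R) : nat :=
  carry (kind_of u.1 u.2) (kind_of v.1 v.2) (sign_of (v.1 - u.1)) (sign_of (v.2 - u.2)).

Lemma unit_split_steps_count (u v : R * R) (s : seq (R * R)) :
  all (fun w => unit_split w.1 w.2) [:: u, v & s] ->
  (size s + 1 + step_carry u v <=
     zeros_and_changes (map sign_of (succ_diffs (map fst [:: u, v & s])))
     + zeros_and_changes (map sign_of (succ_diffs (map snd [:: u, v & s]))) + 1)%N.
Proof.
elim: s u v => [|w s IH] u v.
  case/and3P=> uu uv _; have := carry_first_step (step_signs_kind_of uu uv).
  by rewrite /step_carry /=; lia.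
move=> /andP[uu vs_split]; have /and3P[uv uw _] := vs_split.
have := IH v w vs_split.
have := carry_next_step (step_signs_kind_of uu uv) (step_signs_kind_of uv uw).
have unfold_first (f : R * R -> R) :
  zeros_and_changes (map sign_of (succ_diffs (map f [:: u, v, w & s]))) =
  (zero_sign (sign_of (f v - f u)) + opposite_signs (sign_of (f v - f u)) (sign_of (f w - f v))
   + zeros_and_changes (map sign_of (succ_diffs (map f [:: v, w & s]))))%N by [].
rewrite !unfold_first /step_carry -[size (w :: s)]/(size s).+1; lia.
Qed.

End SignsInRealDomain.

Arguments sign_of {R}.

Section SignsOfRealPolynomials.
Variable R : rcfType.
Implicit Types (p q : {poly R}) (ts : seq R).

(* Mean value theorem on each gap of [t0 :: ts]. *)
Lemma deriv_sign_points p t0 ts : path <%R t0 ts ->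
  exists2 xs, path <%R t0 xs &
    map (fun x => sign_of p^`().[x]) xs = map sign_of (succ_diffs (map (horner p) (t0 :: ts))).
Proof.
elim: ts t0 => [|t1 ts IH] t0 /=; first by exists [::].
case/andP=> lt01 /IH[xs xs_path xs_signs].
have [c /[!in_itv] /= /andP[t0c ct1] p_diff] := poly_mvt p lt01.
exists (c :: xs); first by rewrite /= t0c (path_le lt_trans ct1).
by rewrite /= xs_signs p_diff sign_ofMr // subr_gt0.
Qed.

Lemma roots_from_zeros_and_changes q x0 xs : path <%R x0 xs ->
  exists rs, [/\ sorted <%R rs, all (root q) rs, all (>= x0) rs &
    (zeros_and_changes (map (fun x => sign_of q.[x]) (x0 :: xs)) <= size rs)%N].
Proof.
elim: xs x0 => [|x1 xs IH] x0 /=.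
  move=> _; rewrite zero_sign_of !addn0; have [qx0|qx0] := eqVneq q.[x0] 0.
    by exists [:: x0]; rewrite /= lexx rootE qx0 eqxx.
  by exists [::].
case/andP=> lt01 /IH[rs [rs_sorted rs_roots rs_ge zc_le]].
have rs_gt : all (> x0) rs by apply/allP=> r /(allP rs_ge); apply: lt_le_trans.
have rs_ge0 : all (>= x0) rs by apply/allP=> r /(allP rs_gt)/ltW.
rewrite zero_sign_of -addnA.
have [qx0|qx0] := eqVneq q.[x0] 0.
  exists (x0 :: rs); split; rewrite /= ?rootE ?qx0 ?lexx //.
  - by rewrite (path_sortedE lt_trans) rs_gt.
  - by rewrite eqxx.
  - by rewrite opposite_sign_of mul0r ltxx add1n ltnS.
have [sign_change|/negbTE no_change] := boolP (q.[x0] * q.[x1] < 0); last first.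
  by exists rs; rewrite opposite_sign_of no_change.
have [c /[!in_itv] /= /andP[x0c cx1] qc] := poly_ivtoo (ltW lt01) sign_change.
exists (c :: rs); split; rewrite /= ?qc ?(ltW x0c) //.
  rewrite (path_sortedE lt_trans) rs_sorted andbT.
  by apply/allP=> r /(allP rs_ge); apply: lt_le_trans.
by rewrite opposite_sign_of sign_change add1n ltnS.
Qed.

Lemma zeros_and_changes_diffs_le p ts : (1 < size p)%N -> sorted <%R ts ->
  (zeros_and_changes (map sign_of (succ_diffs (map (horner p) ts))) <= (size p).-2)%N.
Proof.
move=> p_nonconst; case: ts => [|t0 ts] //= ts_path.
have [[|x0 xs] xs_path <-] := deriv_sign_points p ts_path; first by [].
have [rs [rs_sorted rs_roots _ zc_le]] :=
  roots_from_zeros_and_changes p^`() (path_sorted xs_path).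
have p'n0 : p^`() != 0 by rewrite -size_poly_gt0 size_deriv -subn1 subn_gt0.
apply: leq_trans zc_le _; rewrite -size_deriv -ltnS.
apply: leq_trans (max_poly_roots p'n0 rs_roots (lt_sorted_uniq rs_sorted)) _.
by case: (size _) => [|[]].
Qed.

Lemma unit_split_points_count (g h : {poly R}) ts : (1 < size g)%N -> (1 < size h)%N ->
  sorted <%R ts -> all (fun t => unit_split g.[t] h.[t]) ts ->
  (size ts <= (size g).-1 + (size h).-1)%N.
Proof.
move=> g_nonconst h_nonconst ts_sorted ts_split.
have [small|] := leqP (size ts) 1; first by apply: leq_trans small _; lia.
case: ts ts_sorted ts_split => [|t0 [|t1 ts]] // ts_sorted ts_split _.
pose pt t := (g.[t], h.[t]).
have := @unit_split_steps_count _ (pt t0) (pt t1) (map pt ts).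
rewrite -!map_cons all_map -!map_comp size_map => /(_ ts_split).
change (fst \o pt) with (horner g); change (snd \o pt) with (horner h).
have := zeros_and_changes_diffs_le g_nonconst ts_sorted.
have := zeros_and_changes_diffs_le h_nonconst ts_sorted.
move=> zc_h zc_g /(leq_trans (leq_addr _ _))/leq_trans.
move=> /(_ _ (leq_add (leq_add zc_g zc_h) (leqnn 1))).
rewrite -[size [:: t0, t1 & ts]]/(size ts).+2.
by move: g_nonconst h_nonconst; case: (size g) => [|[|a]] //; case: (size h) => [|[|b]] //=; lia.
Qed.

End SignsOfRealPolynomials.

Lemma unit_split_prime_factors (z1 z2 : int) (p : nat) : prime p -> z1 * z2 = p%:Z ->
  unit_split z1 z2.
Proof.
move=> p_prime z12; have p_gt1 := prime_gt1 p_prime.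
have abs12 : (`|z1| * `|z2|)%N = p by rewrite -abszM z12.
have unit_factor : `|z1|%N = 1%N \/ `|z2|%N = 1%N.
  have : (`|z1| %| p)%N by rewrite -abs12 dvdn_mulr.
  case/(primeP p_prime).2/orP=> /eqP abs1; first by left.
  by right; apply/eqP; rewrite -(eqn_pmul2l (prime_gt0 p_prime)) -{1}abs1 abs12 muln1.
case: unit_factor => abs_unit.
  have : (z1 == 1) || (z1 == -1) by lia.
  by case/orP=> /eqP z1E; rewrite /unit_split z1E; lia.
have : (z2 == 1) || (z2 == -1) by lia.
by case/orP=> /eqP z2E; rewrite /unit_split z2E; lia.
Qed.

Lemma unit_split_intr (R : realDomainType) (z1 z2 : int) :
  unit_split (z1%:~R : R) z2%:~R = unit_split z1 z2.
Proof.
by rewrite /unit_split -[1 : R]/(1%:~R) -[-1 : R]/((-1)%:~R) !eqr_int !ltr_int.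
Qed.

Lemma prime_value_unit_split (g h : {poly rat}) (m : int) : int_valued g -> int_valued h ->
  prime_value_at (g * h) m ->
  exists z1 z2 : int, [/\ g.[m%:~R] = z1%:~R, h.[m%:~R] = z2%:~R & unit_split z1 z2].
Proof.
move=> /(_ m)[z1 gm] /(_ m)[z2 hm] [p [p_prime ghm]]; exists z1, z2; split=> //.
apply: (unit_split_prime_factors p_prime); apply: (@intr_inj rat).
by rewrite rmorphM /= -gm -hm -hornerM ghm.
Qed.

Lemma Pplus_le_mul_int_valued n (f g h : {poly rat}) : size f = n.+1 -> f = g * h ->
  int_valued g -> int_valued h -> (1 < size g)%N -> (1 < size h)%N -> Pplus_le f n.
Proof.
move=> f_size f_gh g_int h_int g_nonconst h_nonconst s s_uniq s_prime; subst f.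
pose toR := ratr : rat -> realalg.
pose ts := map (fun m : int => (m%:~R : realalg)) (sort <=%R s).
have ts_sorted : sorted <%R ts.
  apply: (homo_sorted (e := <%R)); first by move=> x y; rewrite ltr_int.
  by rewrite lt_sorted_uniq_le sort_uniq s_uniq (sort_sorted (@le_total _ int)).
have ts_split : all (fun t => unit_split (map_poly toR g).[t] (map_poly toR h).[t]) ts.
  apply/allP=> _ /mapP[m m_in ->]; rewrite mem_sort in m_in.
  have [z1 [z2 [gm hm z12]]] := prime_value_unit_split g_int h_int (s_prime m m_in).
  have -> : (m%:~R : realalg) = toR m%:~R by rewrite /toR rmorph_int.
  by rewrite !horner_map gm hm !rmorph_int unit_split_intr.
have size_toR p : size (map_poly toR p) = size p.
  by apply: size_map_inj_poly; [exact: fmorph_inj | exact: rmorph0].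
have := unit_split_points_count _ _ ts_sorted ts_split.
rewrite !size_toR size_map size_sort => /(_ g_nonconst h_nonconst).
move: f_size; rewrite size_mul -?size_poly_gt0 ?(ltnW g_nonconst) ?(ltnW h_nonconst) //.
by move: g_nonconst h_nonconst; case: (size g) => [|[|a]] //; case: (size h) => [|[|b]] //= *; lia.
Qed.

Lemma root_deriv_mul2 (R : comNzRingType) (p q r : {poly R}) x :
  root p x -> root q x -> root (p * (q * r))^`() x.
Proof.
move=> /eqP px /eqP qx; rewrite /root !derivM !(hornerD, hornerM) px qx.
by rewrite !(mul0r, mulr0, add0r).
Qed.

Section CyclotomicOverField.
Variable F : fieldType.
Local Notation PhiF n := (map_poly (intr : int -> F) 'Phi_n).

Lemma prod_CyclotomicF M : (0 < M)%N -> \prod_(d <- divisors M) PhiF d = 'X^M - 1.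
Proof.
by move=> M_gt0; rewrite -rmorph_prod prod_Cyclotomic // rmorphB /= map_polyXn rmorph1.
Qed.

Lemma Cyclotomic_mul2_factor M d : (0 < M)%N -> (d %| M)%N -> d != M ->
  exists r, 'X^M - 1 = PhiF M * (PhiF d * r).
Proof.
move=> M_gt0 d_dvd d_neq.
have M_in : M \in divisors M by rewrite -dvdn_divisors.
have d_in : d \in [seq e <- divisors M | e != M] by rewrite mem_filter d_neq -dvdn_divisors.
rewrite -prod_CyclotomicF // (bigD1_seq M) ?divisors_uniq //= -big_filter.
by rewrite (bigD1_seq d) ?filter_uniq ?divisors_uniq //; eexists.
Qed.

Lemma root_Cyclotomic_unity M x : (0 < M)%N -> root (PhiF M) x -> x ^+ M = 1.
Proof.
move=> M_gt0 /eqP Phi_x; apply/eqP; rewrite -subr_eq0.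
have M_in : M \in divisors M by rewrite -dvdn_divisors.
have := congr1 (horner^~ x) (prod_CyclotomicF M_gt0).
rewrite /= (bigD1_seq M) ?divisors_uniq // hornerM Phi_x mul0r.
by rewrite hornerD hornerN hornerXn hornerC => <-.
Qed.

Lemma root_Cyclotomic_prim_root M x : (0 < M)%N -> (M%:R : F) != 0 ->
  root (PhiF M) x -> M.-primitive_root x.
Proof.
move=> M_gt0 M_neq0 Phi_x; have xM := root_Cyclotomic_unity M_gt0 Phi_x.
have [m prim_m m_dvd] := prim_order_exists M_gt0 xM.
have [<-//|m_neq] := eqVneq m M.
have m_gt0 := prim_order_gt0 prim_m.
have : \prod_(d <- divisors m) (PhiF d).[x] == 0.
  by rewrite -horner_prod prod_CyclotomicF // !hornerE prim_expr_order // subrr.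
rewrite prodf_seq_eq0 => /hasP[d]; rewrite -dvdn_divisors // => d_dvd /= Phid_x.
have d_lt : (d < M)%N.
  apply: leq_ltn_trans (dvdn_leq m_gt0 d_dvd) _.
  by rewrite ltn_neqAle m_neq dvdn_leq.
have [r XM] := Cyclotomic_mul2_factor M_gt0 (dvdn_trans d_dvd m_dvd) (negbT (ltn_eqF d_lt)).
have := root_deriv_mul2 r Phi_x Phid_x; rewrite -XM /root derivB derivXn derivC subr0.
rewrite hornerMn hornerXn -mulr_natr mulf_eq0 (negbTE M_neq0) orbF expf_eq0.
have x_neq0 : x != 0 by apply: contra_eq_neq xM => ->; rewrite expr0n gtn_eqF // eq_sym oner_eq0.
by rewrite (negbTE x_neq0) andbF.
Qed.

End CyclotomicOverField.

Lemma exists_nonroot_at_multiple (Q : {poly int}) M : Q != 0 -> (0 < M)%N ->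
  exists2 t, (0 < t)%N & ~~ root Q (M * t)%:Z.
Proof.
move=> Q_neq0 M_gt0; pose ts := iota 1 (size Q).
have [all_roots|] := boolP (all (fun t => root Q (M * t)%:Z) ts).
  have mulM_inj : injective (fun t => (M * t)%:Z).
    by move=> t t' /eqP; rewrite eqz_nat eqn_pmul2l // => /eqP.
  have ts_uniq : uniq (map (fun t => (M * t)%:Z) ts) by rewrite map_inj_uniq ?iota_uniq.
  have := max_poly_roots Q_neq0 _ ts_uniq.
  by rewrite all_map size_map size_iota ltnn => /(_ all_roots).
by rewrite -has_predC => /hasP[t]; rewrite mem_iota => /andP[t_gt0 _]; exists t.
Qed.

Lemma expf_Fp_pred (q : nat) (x : 'F_q) : prime q -> x != 0 -> x ^+ q.-1 = 1.
Proof.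
move=> q_prime x_neq0; apply: (mulfI x_neq0); rewrite -exprS prednK ?prime_gt0 //.
by have := expf_card x; rewrite card_Fp // mulr1.
Qed.

Lemma exists_prime_1_mod M : (0 < M)%N -> exists2 q, prime q & (M %| q.-1)%N.
Proof.
move=> M_gt0; pose Phi := 'Phi_M.
have Phi_nonconst : (1 < size Phi)%N by rewrite size_Cyclotomic ltnS totient_gt0.
have size_PhiD c : size (Phi + c%:P) = size Phi.
  by rewrite size_polyDl // size_polyC; case: (c != 0); apply: leq_trans Phi_nonconst.
have Q_neq0 : Phi * ((Phi - 1) * (Phi + 1)) != 0.
  by rewrite !mulf_neq0 // -size_poly_gt0 ?size_PhiD ?(ltnW Phi_nonconst) // -polyCN size_PhiD ltnW.
have [t t_gt0] := exists_nonroot_at_multiple Q_neq0 M_gt0.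
set a := (M * t)%:Z; set A := Phi.[a].
rewrite /root !(hornerM, hornerD, hornerN, hornerC) !mulf_eq0 !negb_or -/A.
case/and3P=> A_neq0 A_neq1 A_neqN1.
have A_big : (1 < `|A|)%N by move: A_neq0 A_neq1 A_neqN1 => /eqP ? /eqP ? /eqP ?; lia.
pose q := pdiv `|A|; have q_prime : prime q := pdiv_prime A_big.
have q_char : q \in [pchar 'F_q] := pchar_Fp q_prime.
pose x : 'F_q := a%:~R.
have Phi_x : root (map_poly intr Phi) x.
  by rewrite /root horner_map -(dvdz_pcharf q_char) dvdzE pdiv_dvd.
have x_neq0 : x != 0.
  apply: contra_eq_neq (root_Cyclotomic_unity M_gt0 Phi_x) => ->.
  by rewrite expr0n gtn_eqF // eq_sym oner_eq0.
have M_neq0 : (M%:R : 'F_q) != 0.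
  rewrite -(dvdn_pcharf q_char); apply: contra x_neq0 => q_dvd_M.
  by rewrite -(dvdz_pcharf q_char) dvdzE absz_nat dvdn_mulr.
exists q => //.
by rewrite (prim_order_dvd (root_Cyclotomic_prim_root M_gt0 M_neq0 Phi_x)) expf_Fp_pred.
Qed.

Local Notation pZtoQ := (map_poly (intr : int -> rat)).

Lemma int_valued_pZtoQ (P : {poly int}) : int_valued (pZtoQ P).
Proof. by move=> m; exists P.[m]; rewrite -horner_map. Qed.

Lemma not_irreducible_mul (F : fieldType) (p q : {poly F}) :
  (1 < size p)%N -> (1 < size q)%N -> ~ irreducible_poly (p * q).
Proof.
move=> p_nonconst q_nonconst [_ /(_ p (negbT (gtn_eqF p_nonconst)))].
rewrite dvdp_mulr // => /(_ isT) /eqp_size.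
rewrite size_mul -?size_poly_gt0 ?(ltnW p_nonconst) ?(ltnW q_nonconst) //.
by move: p_nonconst q_nonconst; case: (size p) => [|[|a]] //; case: (size q) => [|[|b]] //= *; lia.
Qed.

Lemma int_coeffs_reducible f : int_coeffs f -> (1 < size f)%N -> ~ irreducible_poly f ->
  exists g h : {poly int}, [/\ f = pZtoQ g * pZtoQ h, (1 < size g)%N & (1 < size h)%N].
Proof.
move=> f_int f_nonconst f_red.
have [F f_F] : exists F : {poly int}, f = pZtoQ F.
  exists (map_poly numq f); apply/polyP => i.
  by rewrite coef_map /= coef_map_id0 //; have [z ->] := f_int i; rewrite numq_int.
subst f.
have [q [q_nonunit q_dvd q_neqp]] :
    exists q : {poly rat}, [/\ size q != 1%N, q %| pZtoQ F & ~~ (q %= pZtoQ F)].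
  apply: NNPP => no_factor; apply: f_red; split=> // q q_nonunit q_dvd.
  by apply: contraT => q_neqp; case: no_factor; exists q.
have F_neq0 : pZtoQ F != 0 by rewrite -size_poly_gt0 ltnW.
have q_neq0 : q != 0 by apply: contraTneq q_dvd => ->; rewrite dvd0p.
have [g [a a_neq0 q_ag] [h F_gh]] := dvdpP_rat_int q_dvd.
have size_g : size g = size q by rewrite q_ag size_scale // size_rat_int_poly.
exists g, h; split; first by rewrite F_gh rmorphM.
  by move: q_nonunit q_neq0; rewrite -size_g -size_poly_eq0; lia.
rewrite ltnNge; apply: contra q_neqp => /size1_polyC h_const.
move: (h`_0) h_const => c h_const.
have c_neq0 : c%:~R != 0 :> rat.
  by apply: contraNneq F_neq0; rewrite F_gh h_const rmorphM /= map_polyC /= => ->; rewrite mulr0.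
rewrite q_ag F_gh h_const rmorphM /= map_polyC mulrC mul_polyC.
by apply: eqp_trans (eqp_scale _ a_neq0) _; rewrite eqp_sym eqp_scale.
Qed.

Lemma exists_distinct_primes L : exists2 ps : seq nat, uniq ps & all prime ps /\ size ps = L.
Proof.
elim: L => [|L [ps ps_uniq [ps_prime ps_size]]]; first by exists [::].
have [p p_gt p_prime] := prime_above (\max_(x <- ps) x).
exists (p :: ps); last by rewrite /= p_prime ps_prime ps_size.
rewrite /= ps_uniq andbT; apply: contraL p_gt => p_in.
by rewrite -leqNgt (@leq_bigmax_seq _ ps xpredT id p p_in).
Qed.

Lemma prod_one_sub (ps : seq nat) : all (leq 1) ps ->
  \prod_(p <- ps) (1 - p%:Z) = (-1) ^+ size ps * (\prod_(p <- ps) p.-1)%N%:Z.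
Proof.
elim: ps => [|p ps IH]; first by rewrite !big_nil expr0 mul1r.
case/andP=> p_gt0 /IH; rewrite !big_cons /= PoszM predn_int // exprS => ->; ring.
Qed.

Lemma exists_poly_one_at_primes (ps : seq nat) : ps != [::] -> all prime ps ->
  exists2 H : {poly int}, size H = (size ps).+1 &
    (forall p, p \in ps -> H.[p%:Z] = 1) /\ exists2 q, prime q & H.[1] = q%:Z.
Proof.
move=> ps_neq0 ps_prime.
pose M := (\prod_(p <- ps) p.-1)%N.
have M_gt0 : (0 < M)%N.
  by rewrite /M big_seq prodn_cond_gt0 // => p /(allP ps_prime)/prime_gt1; case: p.
have [q q_prime /dvdnP[k q_kM]] := exists_prime_1_mod M_gt0.
have k_gt0 : (0 < k)%N.
  by case: k q_kM => // q_pred; move: (prime_gt1 q_prime); rewrite mul0n in q_pred; lia.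
pose P := \prod_(z <- [seq p%:Z | p <- ps]) ('X - z%:P).
pose c : int := (-1) ^+ size ps * k%:Z.
have c_neq0 : c != 0 by rewrite mulf_neq0 ?signr_eq0 // eqz_nat -lt0n.
have size_P : size P = (size ps).+1 by rewrite size_prod_XsubC size_map.
exists (1 + c *: P).
  rewrite addrC size_polyDl size_scale // size_P // size_poly1 ltnS lt0n size_eq0 //.
split=> [p p_in|].
  have /eqP P_p : root P p%:Z by rewrite root_prod_XsubC map_f.
  by rewrite hornerD hornerC hornerZ P_p mulr0 addr0.
exists q => //; rewrite hornerD hornerC hornerZ horner_prod big_map.
under eq_bigr do rewrite hornerXsubC.
rewrite prod_one_sub; last by apply/allP=> p /(allP ps_prime)/prime_gt0.
rewrite /c mulrACA -exprD -signr_odd oddD addbb mul1r.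
by rewrite -PoszM -q_kM -[q]prednK ?prime_gt0 // -addn1 PoszD addrC.
Qed.

Lemma exists_X_mul_prime_values n : (2 <= n)%N -> exists2 H : {poly int}, size H = n &
  exists s : seq int,
    [/\ uniq s, forall m, m \in s -> prime_value_at (pZtoQ ('X * H)) m & size s = n].
Proof.
move=> n_ge2; have [ps ps_uniq [ps_prime ps_size]] := exists_distinct_primes n.-1.
have ps_neq0 : ps != [::] by rewrite -size_eq0 ps_size; lia.
have [H H_size [H_ps [q q_prime H_1]]] := exists_poly_one_at_primes ps_neq0 ps_prime.
exists H; first by rewrite H_size ps_size prednK //; lia.
exists (1 :: [seq p%:Z | p <- ps]); split.
- rewrite /= map_inj_uniq ?ps_uniq ?andbT; last by move=> ? ? [].
  by apply/mapP=> -[p /(allP ps_prime)/prime_gt1]; case: p => [|[|p]].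
- move=> m; rewrite inE => /orP[/eqP->|/mapP[p p_in ->]].
    by exists q; rewrite horner_map /= hornerM hornerX H_1 mul1r pmulrn.
  exists p; rewrite (allP ps_prime) //.
  by rewrite horner_map /= hornerM hornerX H_ps // mulr1 pmulrn.
- by rewrite /= size_map ps_size prednK //; lia.
Qed.

Theorem theorem3 (n : nat) (hn : (2 <= n)%N) :
  (forall f g h : {poly rat},
      size f = n.+1 -> f = g * h ->
      int_valued g -> int_valued h -> (1 < size g)%N -> (1 < size h)%N ->
      Pplus_le f n)
  /\
  (exists f : {poly rat},
      [/\ int_coeffs f, size f = n.+1, ~ irreducible_poly f & Pplus_eq f n])
  /\
  (forall f : {poly rat},
      int_coeffs f -> size f = n.+1 -> ~ irreducible_poly f -> Pplus_le f n)
  /\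
  (exists f g h : {poly rat},
      [/\ size f = n.+1, f = g * h, int_valued g /\ int_valued h,
          (1 < size g)%N /\ (1 < size h)%N & Pplus_eq f n]).
Proof.
have [H H_size [s [s_uniq s_prime s_size]]] := exists_X_mul_prime_values hn.
have f_XH : pZtoQ ('X * H) = pZtoQ 'X * pZtoQ H by rewrite rmorphM.
have X_nonconst : (1 < size (pZtoQ 'X))%N by rewrite size_rat_int_poly size_polyX.
have H_nonconst : (1 < size (pZtoQ H))%N by rewrite size_rat_int_poly H_size.
have f_size : size (pZtoQ ('X * H)) = n.+1.
  by rewrite size_rat_int_poly mulrC size_mulX ?H_size // -size_poly_gt0 H_size; lia.
have f_Pplus : Pplus_eq (pZtoQ ('X * H)) n.
  split; last by exists s.
  exact: Pplus_le_mul_int_valued f_size f_XH (int_valued_pZtoQ _) (int_valued_pZtoQ _)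
    X_nonconst H_nonconst.
split; first exact: Pplus_le_mul_int_valued.
split.
  exists (pZtoQ ('X * H)); split=> //; last by rewrite f_XH; apply: not_irreducible_mul.
  by move=> i; exists (('X * H)`_i); rewrite coef_map.
split.
  move=> f f_int f_size' f_red.
  have f_nonconst : (1 < size f)%N by rewrite f_size' ltnS ltnW.
  have [g [h [f_gh g_nonconst h_nonconst]]] := int_coeffs_reducible f_int f_nonconst f_red.
  apply: Pplus_le_mul_int_valued f_size' f_gh (int_valued_pZtoQ _) (int_valued_pZtoQ _) _ _;
  by rewrite size_rat_int_poly.
exists (pZtoQ ('X * H)), (pZtoQ 'X), (pZtoQ H).
by split=> //; split=> //; apply: int_valued_pZtoQ.
Qed.
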